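(* Fix $n\ge1$ and let $\kappa_n=1+4\pi^2n^2D$. If $\kappa_n\neq3/2$, then a pitchfork bifurcation occurs at $(\kappa_n,\kappa_n)$, and its type is determined by the sign of $\alpha_n''(0)$: it is subcritical if $\alpha_n''(0)<0$, i.e. $\kappa_n<3/2$ (equivalently $0<D<(8n^2\pi^2)^{-1}$), and supercritical if $\alpha_n''(0)>0$, i.e. $\kappa_n>3/2$ (equivalently $D>(8n^2\pi^2)^{-1}$).
   Context: $\mathbb{T}=[0,1]$ with endpoints identified; $D>0$; stationary problem $0=DU_{xx}-U+\kappa e^U/\int_0^1e^Udy$, periodic, with trivial branch $U\equiv\kappa$. Near $(\kappa_n,\kappa_n)$ the nonconstant solutions form a smooth branch $\Gamma_n(s)=(\kappa_n+\alpha_n(s)+s\sqrt2\cos(2n\pi x)+sz_n(s),\ \kappa_n+\alpha_n(s))$, $|s|<\delta$, with $\alpha_n$ smooth, $\alpha_n(0)=\alpha_n'(0)=0$ and $z_n(0)=0$. The bifurcation is a pitchfork if $\alpha_n''(0)\ne0$; it is subcritical if $\kappa_n+\alpha_n(s)<\kappa_n$ for small $s\neq0$ (branch on the side where the trivial solution is stable) and supercritical if $\kappa_n+\alpha_n(s)>\kappa_n$ for small $s\ne0$. *)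

From Stdlib Require Import Reals Lra.
From Coquelicot Require Import Coquelicot.
Open Scope R_scope.

Definition kappa (D : R) (n : nat) : R := 1 + 4 * PI ^ 2 * (INR n) ^ 2 * D.

Definition smooth_on1 (delta : R) (a : R -> R) : Prop :=
  forall (k : nat) (s : R), Rabs s < delta -> ex_derive_n a k s.

Definition partial_sx (f : R -> R -> R) (m k : nat) (s x : R) : R :=
  Derive_n (fun s' => Derive_n (f s') k x) m s.

Definition smooth_on2 (delta : R) (f : R -> R -> R) : Prop :=
  forall (m k : nat) (s x : R), Rabs s < delta ->
    ex_derive_n (f s) k x /\
    ex_derive_n (fun s' => Derive_n (f s') k x) m s /\
    continuous (fun p : R * R => partial_sx f m k (fst p) (snd p)) (s, x).

Definition Gamma_U (D : R) (n : nat) (a : R -> R) (z : R -> R -> R) (s : R)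
  : R -> R :=
  fun x => kappa D n + a s + s * sqrt 2 * cos (2 * INR n * PI * x) + s * z s x.

Definition stationary_solution (D k : R) (U : R -> R) : Prop :=
  (forall x, U (x + 1) = U x) /\
  (forall x, ex_derive_n U 2 x) /\
  (forall x, D * Derive_n U 2 x - U x
             + k * exp (U x) / RInt (fun y => exp (U y)) 0 1 = 0).

(* (alpha_n, z_n) parametrize a smooth branch of nonconstant solutions
   Gamma_n(s) = (kappa_n + alpha_n(s) + s sqrt2 cos(2 n pi x) + s z_n(s),
                 kappa_n + alpha_n(s)),  |s| < delta. *)
Definition is_branch (D : R) (n : nat) (delta : R)
    (a : R -> R) (z : R -> R -> R) : Prop :=
  0 < delta /\
  smooth_on1 delta a /\ a 0 = 0 /\ Derive a 0 = 0 /\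
  smooth_on2 delta z /\ (forall x, z 0 x = 0) /\
  (forall s x, Rabs s < delta -> z s (x + 1) = z s x) /\
  (forall s, Rabs s < delta ->
     stationary_solution D (kappa D n + a s) (Gamma_U D n a z s)).

Definition subcritical (a : R -> R) : Prop :=
  exists eps, 0 < eps /\ forall s, 0 < Rabs s < eps -> a s < 0.
Definition supercritical (a : R -> R) : Prop :=
  exists eps, 0 < eps /\ forall s, 0 < Rabs s < eps -> a s > 0.
Definition pitchfork (a : R -> R) : Prop := Derive_n a 2 0 <> 0.

(* Testing the stationary equation against an eigenfunction w of -d^2/dx^2
   (eigenvalue mu, periodic) and integrating by parts twice gives, along the branch,
     (1 + D mu) (int w U(s)) (int e^U(s)) = (kappa_n + alpha(s)) (int w e^U(s)).
   For w = cos(2 pi m x) one has 1 + D mu = kappa_m, and kappa_2n = 4 kappa_n - 3.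
   At s = 0 we know U = kappa_n and d_s U = sqrt 2 cos(2 pi n x), so differentiating
   the identity three times for m = n and twice for m = 2n, and integrating powers of
   the cosine, gives two linear relations: the moment of d_s^2 z cancels and the two
   moments of d_s z that remain are eliminated between them, leaving
     6 (kappa_n - 1) alpha''(0) = kappa_n (2 kappa_n - 3).
   As kappa_n > 1, alpha''(0) has the sign of kappa_n - 3/2, and since
   alpha(0) = alpha'(0) = 0 the mean value theorem gives the sign of alpha near 0. *)

From Stdlib Require Import Reals Lra Lia.
From Coquelicot Require Import Coquelicot.
Open Scope R_scope.

Lemma is_derive_eq (f : R -> R) (x l l' : R) :
  is_derive f x l -> l = l' -> is_derive f x l'.
Proof. intros H <-; exact H. Qed.

Lemma is_derive_Rconst (c x : R) : is_derive (fun _ => c) x 0.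
Proof. exact (is_derive_const (K := R_AbsRing) c x). Qed.

Lemma is_derive_Rid (x : R) : is_derive (fun y => y) x 1.
Proof. exact (is_derive_id (K := R_AbsRing) x). Qed.

Lemma is_derive_Rplus (f g : R -> R) (x a b : R) :
  is_derive f x a -> is_derive g x b -> is_derive (fun y => f y + g y) x (a + b).
Proof. exact (is_derive_plus f g x a b). Qed.

Lemma is_derive_Rminus (f g : R -> R) (x a b : R) :
  is_derive f x a -> is_derive g x b -> is_derive (fun y => f y - g y) x (a - b).
Proof. exact (is_derive_minus f g x a b). Qed.

Lemma is_derive_exp_comp (f : R -> R) (x l : R) :
  is_derive f x l -> is_derive (fun y => exp (f y)) x (exp (f x) * l).
Proof.
  intros H; eapply is_derive_eq.
  - exact (is_derive_comp exp f x _ _ (is_derive_exp _) H).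
  - cbn; unfold mult; cbn; ring.
Qed.

(* [leaf] is run on the atomic subterms; pass it as [ltac:(idtac; ...)] so that a
   [match goal] inside it is not evaluated at the call site. *)
Ltac derive_expr leaf :=
  repeat lazymatch goal with
  | |- is_derive (fun _ => ?c) _ _ => apply is_derive_Rconst
  | |- is_derive (fun y => y) _ _ => apply is_derive_Rid
  | |- is_derive (fun y => @?A y + @?B y) _ _ => apply (is_derive_Rplus A B)
  | |- is_derive (fun y => @?A y - @?B y) _ _ => apply (is_derive_Rminus A B)
  | |- is_derive (fun y => @?A y * @?B y) _ _ => apply (Derive.is_derive_mult A B)
  | |- is_derive (fun y => exp (@?A y)) _ _ => apply (is_derive_exp_comp A)
  | |- is_derive _ _ _ => leaf
  end.

Lemma continuity_pt_of_is_derive (f : R -> R) (x l : R) :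
  is_derive f x l -> continuity_pt f x.
Proof.
  intros H; apply continuity_pt_filterlim, (ex_derive_continuous f x).
  exists l; exact H.
Qed.

Lemma continuous_of_is_derive (f : R -> R) (x l : R) : is_derive f x l -> continuous f x.
Proof. intros H; apply (ex_derive_continuous f x); exists l; exact H. Qed.

Lemma continuous_Rmult (f g : R -> R) (x : R) :
  continuous f x -> continuous g x -> continuous (fun y => f y * g y) x.
Proof. exact (continuous_mult f g x). Qed.

Lemma continuous_Rminus (f g : R -> R) (x : R) :
  continuous f x -> continuous g x -> continuous (fun y => f y - g y) x.
Proof. exact (continuous_minus f g x). Qed.

Lemma continuous_Rlin (f g : R -> R) (c d x : R) :
  continuous f x -> continuous g x -> continuous (fun y => c * f y + d * g y) x.
Proof.
  intros Hf Hg.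
  exact (continuous_plus _ _ x (continuous_Rmult _ _ x (continuous_const c x) Hf)
           (continuous_Rmult _ _ x (continuous_const d x) Hg)).
Qed.

Lemma continuous_exp_comp (f : R -> R) (x : R) :
  continuous f x -> continuous (fun y => exp (f y)) x.
Proof.
  intros Hf; apply (continuous_comp f exp); [exact Hf |].
  exact (continuous_of_is_derive _ _ _ (is_derive_exp _)).
Qed.

Lemma locally_Rabs_lt (delta s : R) :
  Rabs s < delta -> locally s (fun u => Rabs u < delta).
Proof.
  intros Hs; assert (Hr : 0 < delta - Rabs s) by lra.
  exists (mkposreal _ Hr); intros u Hu.
  change (Rabs (u - s) < delta - Rabs s) in Hu.
  pose proof (Rabs_triang_inv u s); lra.
Qed.

Lemma is_derive_locally_zero (f : R -> R) (delta s l : R) :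
  Rabs s < delta -> (forall u, Rabs u < delta -> f u = 0) ->
  is_derive f s l -> l = 0.
Proof.
  intros Hs Hf Hd; rewrite <- (is_derive_unique _ _ _ Hd).
  rewrite (Derive_ext_loc f (fun _ => 0)); [apply Derive_const |].
  exact (filter_imp _ _ Hf (locally_Rabs_lt delta s Hs)).
Qed.

Lemma continuity_2d_pt_fst_comp (f : R -> R) (s x : R) :
  continuity_pt f s -> continuity_2d_pt (fun u _ => f u) s x.
Proof.
  intros H; apply (continuity_1d_2d_pt_comp f (fun u _ => u));
    [exact H | apply continuity_2d_pt_id1].
Qed.

Lemma continuity_2d_pt_snd_comp (f : R -> R) (s x : R) :
  continuity_pt f x -> continuity_2d_pt (fun _ v => f v) s x.
Proof.
  intros H; apply (continuity_1d_2d_pt_comp f (fun _ v => v));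
    [exact H | apply continuity_2d_pt_id2].
Qed.

Lemma continuity_2d_pt_exp (f : R -> R -> R) (s x : R) :
  continuity_2d_pt f s x -> continuity_2d_pt (fun u v => exp (f u v)) s x.
Proof.
  intros H; apply (continuity_1d_2d_pt_comp exp f); [| exact H].
  exact (continuity_pt_of_is_derive _ _ _ (is_derive_exp _)).
Qed.

Ltac continuity_2d_expr leaf :=
  repeat lazymatch goal with
  | |- continuity_2d_pt (fun _ _ => ?c) _ _ => apply continuity_2d_pt_const
  | |- continuity_2d_pt (fun u _ => u) _ _ => apply continuity_2d_pt_id1
  | |- continuity_2d_pt (fun u v => @?A u v + @?B u v) _ _ => apply (continuity_2d_pt_plus A B)
  | |- continuity_2d_pt (fun u v => @?A u v * @?B u v) _ _ => apply (continuity_2d_pt_mult A B)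
  | |- continuity_2d_pt (fun u v => exp (@?A u v)) _ _ => apply (continuity_2d_pt_exp A)
  | |- continuity_2d_pt _ _ _ => leaf
  end.

Lemma continuous_slice (h : R -> R -> R) (s x : R) :
  continuity_2d_pt h s x -> continuous (h s) x.
Proof.
  intros H; apply continuity_2d_pt_filterlim in H.
  apply (continuous_comp_2 (fun _ => s) (fun v => v) h x);
    [apply continuous_const | apply continuous_id | exact H].
Qed.

Lemma is_derive_RInt_param_strip (h h' : R -> R -> R) (a b delta s : R) :
  (forall u x, Rabs u < delta -> is_derive (fun v => h v x) u (h' u x)) ->
  (forall u x, Rabs u < delta -> continuity_2d_pt h u x) ->
  (forall u x, Rabs u < delta -> continuity_2d_pt h' u x) ->
  Rabs s < delta ->
  is_derive (fun u => RInt (h u) a b) s (RInt (h' s) a b).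
Proof.
  intros Hd Hc Hc' Hs; pose proof (locally_Rabs_lt delta s Hs) as Hloc.
  replace (RInt (h' s) a b) with (RInt (fun x => Derive (fun v => h v x) s) a b).
  - apply (is_derive_RInt_param h a b s).
    + apply (filter_imp _ _ (fun u Hu x _ => ex_intro _ _ (Hd u x Hu)) Hloc).
    + intros x _; apply (continuity_2d_pt_ext_loc h'); [| exact (Hc' s x Hs)].
      destruct Hloc as [e He]; exists e; intros u v Hu _.
      symmetry; exact (is_derive_unique _ _ _ (Hd u v (He u Hu))).
    + apply (filter_imp (fun u => Rabs u < delta)); [| exact Hloc].
      intros u Hu; apply (ex_RInt_continuous (V := R_CompleteNormedModule)).
      intros x _; exact (continuous_slice h u x (Hc u x Hu)).
  - apply RInt_ext; intros x _; exact (is_derive_unique _ _ _ (Hd s x Hs)).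
Qed.

Definition moment (w : R -> R) (F : R -> R -> R) (s : R) : R :=
  RInt (fun x => w x * F s x) 0 1.

Definition derive_chain (m : nat) (delta : R) (f : nat -> R -> R) : Prop :=
  forall k s, (k < m)%nat -> Rabs s < delta -> is_derive (f k) s (f (S k) s).

Lemma derive_chain_vanish (m : nat) (delta : R) (f : nat -> R -> R) :
  derive_chain m delta f -> (forall s, Rabs s < delta -> f O s = 0) ->
  forall k s, (k <= m)%nat -> Rabs s < delta -> f k s = 0.
Proof.
  intros Hf H0 k; induction k as [| k IH]; intros s Hk Hs; [exact (H0 s Hs) |].
  apply (is_derive_locally_zero (f k) delta s); [exact Hs | |].
  - intros u Hu; apply IH; [lia | exact Hu].
  - apply Hf; [lia | exact Hs].
Qed.

Lemma derive_chain_moment (m : nat) (delta : R) (w : R -> R) (F : nat -> R -> R -> R) :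
  (forall x, continuity_pt w x) ->
  (forall k s x, (k < m)%nat -> Rabs s < delta ->
     is_derive (fun u => F k u x) s (F (S k) s x)) ->
  (forall k s x, (k <= m)%nat -> Rabs s < delta -> continuity_2d_pt (F k) s x) ->
  derive_chain m delta (fun k => moment w (F k)).
Proof.
  intros Hw Hd Hc k s Hk Hs.
  assert (Hc' : forall j u x, (j <= m)%nat -> Rabs u < delta ->
            continuity_2d_pt (fun u x => w x * F j u x) u x).
  { intros j u x Hj Hu; apply continuity_2d_pt_mult;
      [apply continuity_2d_pt_snd_comp, Hw | exact (Hc j u x Hj Hu)]. }
  apply (is_derive_RInt_param_strip (fun u x => w x * F k u x)
           (fun u x => w x * F (S k) u x) 0 1 delta s); [| | | exact Hs].
  - intros u x Hu; apply is_derive_scal, Hd; assumption.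
  - intros u x Hu; apply Hc'; [lia | exact Hu].
  - intros u x Hu; apply Hc'; [lia | exact Hu].
Qed.

Lemma derive_chain_scal (m : nat) (delta c : R) (f : nat -> R -> R) :
  derive_chain m delta f -> derive_chain m delta (fun k s => c * f k s).
Proof. intros Hf k s Hk Hs; apply is_derive_scal, Hf; assumption. Qed.

Lemma derive_chain_minus (m : nat) (delta : R) (f g : nat -> R -> R) :
  derive_chain m delta f -> derive_chain m delta g ->
  derive_chain m delta (fun k s => f k s - g k s).
Proof.
  intros Hf Hg k s Hk Hs; apply is_derive_Rminus; [apply Hf | apply Hg]; assumption.
Qed.

Definition leibniz3 (f g : nat -> R -> R) (k : nat) (s : R) : R :=
  match k with
  | O => f O s * g O s
  | 1 => f 1%nat s * g O s + f O s * g 1%nat s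
  | 2 => f 2%nat s * g O s + 2 * (f 1%nat s * g 1%nat s) + f O s * g 2%nat s
  | _ => f 3%nat s * g O s + 3 * (f 2%nat s * g 1%nat s) + 3 * (f 1%nat s * g 2%nat s)
         + f O s * g 3%nat s
  end.

Lemma derive_chain_leibniz3 (delta : R) (f g : nat -> R -> R) :
  derive_chain 3 delta f -> derive_chain 3 delta g -> derive_chain 3 delta (leibniz3 f g).
Proof.
  intros Hf Hg k s Hk Hs.
  destruct k as [| [| [| k]]]; [| | | lia]; unfold leibniz3; cbv beta iota;
    (eapply is_derive_eq;
    [ derive_expr ltac:(idtac; lazymatch goal with
        | |- is_derive ?h _ _ =>
          match h with
          | context [f ?j] => apply (Hf j s)
          | context [g ?j] => apply (Hg j s)
          end; [lia | exact Hs]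
        end)
    | cbv beta; ring ]).
Qed.

Lemma derive_sign_near_0 (f1 : R -> R) (a : R) :
  is_derive f1 0 a -> f1 0 = 0 -> a < 0 ->
  exists eps, 0 < eps /\ forall c, 0 < Rabs c < eps -> f1 c * c < 0.
Proof.
  intros Hd H0 Ha; apply is_derive_Reals in Hd.
  destruct (Hd (- a / 2)) as [e He]; [lra |].
  exists e; split; [apply cond_pos |]; intros c [Hc0 Hc].
  assert (Hcn : c <> 0) by (intros ->; rewrite Rabs_R0 in Hc0; lra).
  specialize (He c Hcn Hc); rewrite Rplus_0_l, H0, Rminus_0_r in He.
  apply Rabs_def2 in He.
  replace (f1 c * c) with (f1 c / c * (c * c)) by (field; exact Hcn).
  assert (0 < c * c) by nra; nra.
Qed.

Lemma MVT_from_0 (f f1 : R -> R) (delta s : R) :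
  (forall u, Rabs u < delta -> is_derive f u (f1 u)) -> s <> 0 -> Rabs s < delta ->
  exists c, 0 < Rabs c < Rabs s /\ 0 < c * s /\ f s - f 0 = f1 c * s.
Proof.
  intros Hd Hs0 Hs.
  assert (Hdl : forall c, Rabs c <= Rabs s -> derivable_pt_lim f c (f1 c))
    by (intros c Hc; apply is_derive_Reals, Hd; lra).
  destruct (Rlt_or_le 0 s) as [Hp | Hn].
  - destruct (MVT_cor2 f f1 0 s Hp) as [c [Hf Hc]].
    { intros c Hc; apply Hdl; rewrite !Rabs_right; lra. }
    exists c; rewrite !Rabs_right by lra; split; [lra | split; nra].
  - assert (Hn' : s < 0) by lra.
    destruct (MVT_cor2 f f1 s 0 Hn') as [c [Hf Hc]].
    { intros c Hc; apply Hdl; rewrite !Rabs_left1; lra. }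
    exists c; rewrite !Rabs_left1 by lra; split; [lra | split; nra].
Qed.

Lemma neg_near_0_of_derive2_neg (f f1 : R -> R) (delta a : R) :
  0 < delta -> (forall s, Rabs s < delta -> is_derive f s (f1 s)) ->
  is_derive f1 0 a -> f 0 = 0 -> f1 0 = 0 -> a < 0 ->
  exists eps, 0 < eps /\ forall s, 0 < Rabs s < eps -> f s < 0.
Proof.
  intros Hdel Hd Hd1 H0 H10 Ha.
  destruct (derive_sign_near_0 f1 a Hd1 H10 Ha) as [e [He Hsign]].
  exists (Rmin e delta); split; [apply Rmin_pos; lra |]; intros s [Hs0 Hs].
  pose proof (Rmin_l e delta); pose proof (Rmin_r e delta).
  assert (Hsn : s <> 0) by (intros ->; rewrite Rabs_R0 in Hs0; lra).
  destruct (MVT_from_0 f f1 delta s Hd Hsn) as [c [Hc [Hcs Hf]]]; [lra |].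
  specialize (Hsign c ltac:(lra)).
  assert (Hss : 0 < s * s) by (apply Rsqr_pos_lt; exact Hsn).
  assert (f1 c * s * (c * s) < 0) by
    (replace (f1 c * s * (c * s)) with (f1 c * c * (s * s)) by ring; nra).
  nra.
Qed.

(** * Integrals of powers of the cosine *)

Lemma is_RInt_eq (f g : R -> R) (a b l l' : R) :
  (forall x, f x = g x) -> l = l' -> is_RInt f a b l -> is_RInt g a b l'.
Proof.
  intros Hfg <- H; apply (is_RInt_ext (V := R_NormedModule) f); [intros x _; apply Hfg | exact H].
Qed.

Lemma is_RInt_lin (f g : R -> R) (a b If Ig c d : R) :
  is_RInt f a b If -> is_RInt g a b Ig ->
  is_RInt (fun x => c * f x + d * g x) a b (c * If + d * Ig).
Proof.
  intros Hf Hg.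
  exact (is_RInt_plus (V := R_NormedModule) _ _ a b _ _
           (is_RInt_scal _ a b c _ Hf) (is_RInt_scal _ a b d _ Hg)).
Qed.

Lemma is_RInt_RInt_continuous (f : R -> R) (a b : R) :
  (forall x, continuous f x) -> is_RInt f a b (RInt f a b).
Proof.
  intros H; apply (RInt_correct (V := R_CompleteNormedModule)).
  apply (ex_RInt_continuous (V := R_CompleteNormedModule)); intros x _; apply H.
Qed.

Lemma RInt_ext_R (f g : R -> R) (a b : R) :
  (forall x, f x = g x) -> RInt f a b = RInt g a b.
Proof. intros H; apply RInt_ext; intros x _; apply H. Qed.

Lemma RInt_lin (f g : R -> R) (a b c d : R) :
  (forall x, continuous f x) -> (forall x, continuous g x) ->
  RInt (fun x => c * f x + d * g x) a b = c * RInt f a b + d * RInt g a b.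
Proof.
  intros Hf Hg; apply is_RInt_unique, is_RInt_lin; apply is_RInt_RInt_continuous; assumption.
Qed.

Definition cosn (m : nat) (x : R) : R := cos (2 * INR m * PI * x).

Lemma cos_3a (t : R) : cos (3 * t) = 4 * cos t ^ 3 - 3 * cos t.
Proof.
  replace (3 * t) with (2 * t + t) by ring.
  rewrite cos_plus, sin_2a, cos_2a_cos.
  pose proof (sin2 t) as H; unfold Rsqr in H.
  replace (2 * sin t * cos t * sin t) with (2 * cos t * (sin t * sin t)) by ring.
  rewrite H; ring.
Qed.

Lemma cos_4a (t : R) : cos (4 * t) = 8 * cos t ^ 4 - 8 * cos t ^ 2 + 1.
Proof. replace (4 * t) with (2 * (2 * t)) by ring; rewrite !cos_2a_cos; ring. Qed.

Lemma cosn_mul (k m : nat) (x : R) : cosn (k * m) x = cos (INR k * (2 * INR m * PI * x)).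
Proof. unfold cosn; rewrite mult_INR; f_equal; ring. Qed.

Lemma cosn_pow2 (m : nat) (x : R) : cosn m x ^ 2 = (1 + cosn (2 * m) x) / 2.
Proof.
  rewrite cosn_mul; replace (INR 2) with 2 by (simpl; ring).
  rewrite cos_2a_cos; unfold cosn; field.
Qed.

Lemma cosn_pow3 (m : nat) (x : R) : cosn m x ^ 3 = (3 * cosn m x + cosn (3 * m) x) / 4.
Proof.
  rewrite cosn_mul; replace (INR 3) with 3 by (simpl; ring).
  rewrite cos_3a; unfold cosn; field.
Qed.

Lemma cosn_pow4 (m : nat) (x : R) :
  cosn m x ^ 4 = (3 + 4 * cosn (2 * m) x + cosn (4 * m) x) / 8.
Proof.
  rewrite !cosn_mul; replace (INR 2) with 2 by (simpl; ring);
    replace (INR 4) with 4 by (simpl; ring).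
  rewrite cos_4a, cos_2a_cos; unfold cosn; field.
Qed.

Lemma is_derive_cosn (m : nat) (x : R) :
  is_derive (cosn m) x (- (2 * INR m * PI) * sin (2 * INR m * PI * x)).
Proof. unfold cosn; auto_derive; [exact I | ring]. Qed.

Lemma continuous_cosn_pow (m k : nat) (x : R) : continuous (fun y => cosn m y ^ k) x.
Proof. apply (ex_derive_continuous (fun y => cosn m y ^ k)); unfold cosn; auto_derive; exact I. Qed.

Lemma cosn_periodic (m : nat) :
  cosn m 1 = cosn m 0 /\ sin (2 * INR m * PI * 1) = sin (2 * INR m * PI * 0).
Proof.
  unfold cosn; replace (2 * INR m * PI * 1) with (0 + 2 * INR m * PI) by ring.
  rewrite cos_period, sin_period, Rmult_0_r; split; reflexivity.
Qed.

Lemma is_RInt_cosn (m : nat) : (1 <= m)%nat -> is_RInt (cosn m) 0 1 0.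
Proof.
  intros Hm; pose proof PI_RGT_0.
  assert (Hc : 0 < 2 * INR m * PI) by (apply le_INR in Hm; simpl in Hm; nra).
  assert (HF := is_RInt_derive (V := R_CompleteNormedModule)
                 (fun x => sin (2 * INR m * PI * x) / (2 * INR m * PI)) (cosn m) 0 1).
  eapply is_RInt_eq; [reflexivity | | apply HF].
  - destruct (cosn_periodic m) as [_ Hs].
    unfold minus, plus, opp; cbn; rewrite Hs; ring.
  - intros x _; unfold cosn; auto_derive; [exact I | field; split; nra].
  - intros x _; exact (continuous_of_is_derive _ _ _ (is_derive_cosn m x)).
Qed.

Lemma is_RInt_one : is_RInt (fun _ => 1) 0 1 1.
Proof.
  eapply is_RInt_eq; [reflexivity | | apply (is_RInt_const (V := R_NormedModule))].
  cbn; unfold mult; cbn; ring.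
Qed.

Lemma is_RInt_cosn_pow2 (m : nat) : (1 <= m)%nat -> is_RInt (fun x => cosn m x ^ 2) 0 1 (1 / 2).
Proof.
  intros Hm; apply (is_RInt_eq (fun x => 1 / 2 * 1 + 1 / 2 * cosn (2 * m) x) _ _ _
                                (1 / 2 * 1 + 1 / 2 * 0)).
  - intros x; rewrite cosn_pow2; field.
  - field.
  - exact (is_RInt_lin _ _ 0 1 _ _ _ _ is_RInt_one (is_RInt_cosn (2 * m) ltac:(lia))).
Qed.

Lemma is_RInt_cosn_pow3 (m : nat) : (1 <= m)%nat -> is_RInt (fun x => cosn m x ^ 3) 0 1 0.
Proof.
  intros Hm; apply (is_RInt_eq (fun x => 3 / 4 * cosn m x + 1 / 4 * cosn (3 * m) x) _ _ _
                                (3 / 4 * 0 + 1 / 4 * 0)).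
  - intros x; rewrite cosn_pow3; field.
  - field.
  - exact (is_RInt_lin _ _ 0 1 _ _ _ _ (is_RInt_cosn m Hm) (is_RInt_cosn (3 * m) ltac:(lia))).
Qed.

Lemma is_RInt_cosn_pow4 (m : nat) : (1 <= m)%nat -> is_RInt (fun x => cosn m x ^ 4) 0 1 (3 / 8).
Proof.
  intros Hm.
  apply (is_RInt_eq (fun x => 1 * (3 / 8 * 1 + 1 / 2 * cosn (2 * m) x) + 1 / 8 * cosn (4 * m) x)
           _ _ _ (1 * (3 / 8 * 1 + 1 / 2 * 0) + 1 / 8 * 0)).
  - intros x; rewrite cosn_pow4; field.
  - field.
  - apply is_RInt_lin; [apply is_RInt_lin; [exact is_RInt_one |] |]; apply is_RInt_cosn; lia.
Qed.

(* Every integrand met at s = 0 has this form, with Y = d_s z(0) and Z = d_s^2 z(0). *)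
Lemma RInt_cosn_poly (m : nat) (Y Z f : R -> R) (p0 p1 p2 p3 p4 q0 q2 r : R) :
  (1 <= m)%nat -> (forall x, continuous Y x) -> (forall x, continuous Z x) ->
  (forall x, f x = p0 + p1 * cosn m x + p2 * cosn m x ^ 2 + p3 * cosn m x ^ 3
                   + p4 * cosn m x ^ 4 + q0 * Y x + q2 * (cosn m x ^ 2 * Y x)
                   + r * (cosn m x * Z x)) ->
  RInt f 0 1 = p0 + p2 / 2 + 3 * p4 / 8 + q0 * RInt Y 0 1
               + q2 * RInt (fun x => cosn m x ^ 2 * Y x) 0 1
               + r * RInt (fun x => cosn m x * Z x) 0 1.
Proof.
  intros Hm HY HZ Hf; apply is_RInt_unique.
  assert (HC : forall k x, continuous (fun y => cosn m y ^ k) x) by apply continuous_cosn_pow.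
  assert (HC1 : forall x, continuous (cosn m) x)
    by (intros x; exact (continuous_of_is_derive _ _ _ (is_derive_cosn m x))).
  assert (H1 := is_RInt_lin _ _ 0 1 _ _ p0 p1 is_RInt_one (is_RInt_cosn m Hm)).
  assert (H2 := is_RInt_lin _ _ 0 1 _ _ 1 p2 H1 (is_RInt_cosn_pow2 m Hm)).
  assert (H3 := is_RInt_lin _ _ 0 1 _ _ 1 p3 H2 (is_RInt_cosn_pow3 m Hm)).
  assert (H4 := is_RInt_lin _ _ 0 1 _ _ 1 p4 H3 (is_RInt_cosn_pow4 m Hm)).
  assert (H5 := is_RInt_lin _ _ 0 1 _ _ 1 q0 H4 (is_RInt_RInt_continuous Y 0 1 HY)).
  assert (H6 := is_RInt_lin _ _ 0 1 _ _ 1 q2 H5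
    (is_RInt_RInt_continuous (fun x => cosn m x ^ 2 * Y x) 0 1
       (fun x => continuous_Rmult _ _ x (HC 2%nat x) (HY x)))).
  assert (H7 := is_RInt_lin _ _ 0 1 _ _ 1 r H6
    (is_RInt_RInt_continuous (fun x => cosn m x * Z x) 0 1
       (fun x => continuous_Rmult _ _ x (HC1 x) (HZ x)))).
  eapply is_RInt_eq; [| | exact H7]; [intros x; rewrite Hf; cbv beta; ring | field].
Qed.

(** * Weak form of the stationary problem *)

Lemma Derive_periodic (f : R -> R) :
  (forall x, f (x + 1) = f x) -> ex_derive f 1 -> Derive f 1 = Derive f 0.
Proof.
  intros Hper Hd; rewrite <- (Derive_ext _ _ 0 Hper); symmetry.
  apply is_derive_unique; eapply is_derive_eq.
  - apply (is_derive_comp f (fun x => x + 1)); [rewrite Rplus_0_l; exact (Derive_correct f 1 Hd) |].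
    apply (is_derive_Rplus (fun x => x) (fun _ => 1));
      [apply is_derive_Rid | apply is_derive_Rconst].
  - cbn; unfold mult; cbn; ring.
Qed.

Lemma RInt_green_periodic (u u1 u2 w w1 w2 : R -> R) :
  (forall x, is_derive u x (u1 x)) -> (forall x, is_derive u1 x (u2 x)) ->
  (forall x, is_derive w x (w1 x)) -> (forall x, is_derive w1 x (w2 x)) ->
  (forall x, continuous u2 x) -> (forall x, continuous w2 x) ->
  u 1 = u 0 -> u1 1 = u1 0 -> w 1 = w 0 -> w1 1 = w1 0 ->
  RInt (fun x => w x * u2 x) 0 1 = RInt (fun x => w2 x * u x) 0 1.
Proof.
  intros Hu Hu1 Hw Hw1 Hcu2 Hcw2 Pu Pu1 Pw Pw1.
  assert (Hcu : forall x, continuous u x)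
    by (intros x; exact (continuous_of_is_derive _ _ _ (Hu x))).
  assert (Hcw : forall x, continuous w x)
    by (intros x; exact (continuous_of_is_derive _ _ _ (Hw x))).
  assert (Hint : is_RInt (fun x => 1 * (w x * u2 x) + -1 * (w2 x * u x)) 0 1 0).
  { assert (HF := is_RInt_derive (V := R_CompleteNormedModule)
                     (fun x => w x * u1 x - w1 x * u x) (fun x => w x * u2 x - w2 x * u x) 0 1).
    eapply is_RInt_eq; [| | apply HF]; cbv beta.
    - intros x; ring.
    - unfold minus, plus, opp; simpl; rewrite Pu, Pu1, Pw, Pw1; ring.
    - intros x _; eapply is_derive_eq;
        [apply is_derive_Rminus; apply Derive.is_derive_mult; auto | ring].
    - intros x _; apply continuous_Rminus; apply continuous_Rmult; auto. }
  apply (is_RInt_unique (V := R_CompleteNormedModule)) in Hint.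
  rewrite RInt_lin in Hint by (intros x; apply continuous_Rmult; auto); lra.
Qed.

Lemma RInt_exp_pos (U : R -> R) :
  (forall x, continuous U x) -> 0 < RInt (fun x => exp (U x)) 0 1.
Proof.
  intros HU; apply RInt_gt_0; [lra | intros; apply exp_pos | intros x _].
  exact (continuous_exp_comp U x (HU x)).
Qed.

Lemma stationary_solution_Derive2 (D K : R) (U : R -> R) (x : R) :
  0 < D -> 0 < RInt (fun y => exp (U y)) 0 1 -> stationary_solution D K U ->
  Derive_n U 2 x
  = / D * U x + - (K / (RInt (fun y => exp (U y)) 0 1 * D)) * exp (U x).
Proof.
  intros HD HI (_ & _ & Heq); specialize (Heq x).
  set (I := RInt (fun y => exp (U y)) 0 1) in *.
  apply (Rmult_eq_reg_l D); [| lra].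
  replace (D * (/ D * U x + - (K / (I * D)) * exp (U x))) with (U x - K * exp (U x) / I)
    by (field; lra).
  lra.
Qed.

Lemma stationary_solution_weak_form (D K mu : R) (U w w1 : R -> R) :
  0 < D -> stationary_solution D K U -> (forall x, ex_derive U x) ->
  (forall x, is_derive w x (w1 x)) -> (forall x, is_derive w1 x (- mu * w x)) ->
  w 1 = w 0 -> w1 1 = w1 0 ->
  (1 + D * mu) * RInt (fun x => w x * U x) 0 1 * RInt (fun x => exp (U x)) 0 1
  = K * RInt (fun x => w x * exp (U x)) 0 1.
Proof.
  intros HD Hsol HdU Hw Hw1 Pw Pw1.
  assert (HcU : forall x, continuous U x) by (intros x; exact (ex_derive_continuous U x (HdU x))).
  assert (Hcw : forall x, continuous w x)
    by (intros x; exact (continuous_of_is_derive _ _ _ (Hw x))).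
  pose proof (RInt_exp_pos U HcU) as HI.
  pose proof (fun x => stationary_solution_Derive2 D K U x HD HI Hsol) as HU2.
  set (I := RInt (fun y => exp (U y)) 0 1) in *.
  destruct Hsol as (Hper & Hd2 & _).
  assert (Hgreen : RInt (fun x => w x * Derive_n U 2 x) 0 1
                   = RInt (fun x => - mu * w x * U x) 0 1).
  { apply (RInt_green_periodic U (Derive U) _ w w1); [| | exact Hw | exact Hw1 | | |
      | | exact Pw | exact Pw1].
    - intros x; exact (Derive_correct U x (HdU x)).
    - intros x; exact (Derive_correct (Derive U) x (Hd2 x)).
    - intros x; apply (continuous_ext (fun y => / D * U y + - (K / (I * D)) * exp (U y)));
        [intros y; symmetry; apply HU2 |
         apply continuous_Rlin; [| apply continuous_exp_comp]; auto].
    - intros x; apply continuous_Rmult; [apply continuous_const | apply Hcw].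
    - rewrite <- (Hper 0), Rplus_0_l; reflexivity.
    - apply Derive_periodic; [exact Hper | apply HdU]. }
  rewrite (RInt_ext_R _ (fun x => / D * (w x * U x) + - (K / (I * D)) * (w x * exp (U x))))
    in Hgreen by (intros x; rewrite HU2; ring).
  rewrite (RInt_ext_R (fun x => - mu * w x * U x) (fun x => - mu * (w x * U x) + 0 * (w x * U x)))
    in Hgreen by (intros x; ring).
  rewrite !RInt_lin in Hgreen
    by (intros x; apply continuous_Rmult; [| try apply continuous_exp_comp]; auto).
  set (L := RInt (fun x => w x * U x) 0 1) in *.
  set (E := RInt (fun x => w x * exp (U x)) 0 1) in *.
  replace (K * E) with (I * D * (K / (I * D) * E)) by (field; lra).
  replace (K / (I * D) * E) with (/ D * L + mu * L) by lra.
  field; lra.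
Qed.

(** * Derivatives along the branch at s = 0 *)

Lemma smooth_on1_is_derive (delta : R) (a : R -> R) (k : nat) (s : R) :
  smooth_on1 delta a -> Rabs s < delta -> is_derive (Derive_n a k) s (Derive_n a (S k) s).
Proof. intros H Hs; apply Derive_correct; exact (H (S k) s Hs). Qed.

Lemma smooth_on2_is_derive (delta : R) (z : R -> R -> R) (k : nat) (s x : R) :
  smooth_on2 delta z -> Rabs s < delta ->
  is_derive (fun u => Derive_n (fun v => z v x) k u) s (Derive_n (fun v => z v x) (S k) s).
Proof. intros H Hs; apply Derive_correct; exact (proj1 (proj2 (H (S k) O s x Hs))). Qed.

Lemma smooth_on2_continuity (delta : R) (z : R -> R -> R) (k : nat) (s x : R) :
  smooth_on2 delta z -> Rabs s < delta ->
  continuity_2d_pt (fun u v => Derive_n (fun v' => z v' v) k u) s x.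
Proof. intros H Hs; apply continuity_2d_pt_filterlim; exact (proj2 (proj2 (H k O s x Hs))). Qed.

Lemma kappa_double (D : R) (n : nat) : kappa D (2 * n) = 4 * kappa D n - 3.
Proof. unfold kappa; rewrite mult_INR; simpl INR; ring. Qed.

Lemma cosn_double (m : nat) (x : R) : cosn (2 * m) x = 2 * cosn m x ^ 2 - 1.
Proof. rewrite cosn_pow2; field. Qed.

Section Branch.

Variables (D : R) (n : nat) (delta : R) (alpha : R -> R) (z : R -> R -> R).
Hypotheses (HD : 0 < D) (Hn : (1 <= n)%nat) (Hdelta : 0 < delta).
Hypotheses (Halpha : smooth_on1 delta alpha) (Halpha0 : alpha 0 = 0)
  (Halpha'0 : Derive alpha 0 = 0).
Hypotheses (Hz : smooth_on2 delta z) (Hz0 : forall x, z 0 x = 0).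
Hypothesis Hstat : forall s, Rabs s < delta ->
  stationary_solution D (kappa D n + alpha s) (Gamma_U D n alpha z s).

Definition Gamma_V (j : nat) (s x : R) : R :=
  match j with
  | O => sqrt 2 * cosn n x + z s x
  | S _ => Derive_n (fun u => z u x) j s
  end.

Lemma Gamma_U_eq (s x : R) :
  Gamma_U D n alpha z s x = kappa D n + alpha s + s * Gamma_V 0 s x.
Proof. unfold Gamma_U, Gamma_V, cosn; ring. Qed.

(* Leibniz rule for [s * Gamma_V 0 s x], see [Gamma_U_eq]. *)
Definition Gamma_U_ds (k : nat) (s x : R) : R :=
  match k with
  | O => Gamma_U D n alpha z s x
  | S j => Derive_n alpha k s + INR k * Gamma_V j s x + s * Gamma_V k s x
  end.

(* Faa di Bruno's formula for [exp Gamma_U], up to order 3. *)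
Definition exp_Gamma_U_ds (k : nat) (s x : R) : R :=
  exp (Gamma_U D n alpha z s x) *
  match k with
  | O => 1
  | 1 => Gamma_U_ds 1 s x
  | 2 => Gamma_U_ds 1 s x * Gamma_U_ds 1 s x + Gamma_U_ds 2 s x
  | _ => Gamma_U_ds 1 s x * (Gamma_U_ds 1 s x * Gamma_U_ds 1 s x)
         + 3 * (Gamma_U_ds 1 s x * Gamma_U_ds 2 s x) + Gamma_U_ds 3 s x
  end.

Definition K_ds (k : nat) (s : R) : R :=
  match k with
  | O => kappa D n + alpha s
  | S _ => Derive_n alpha k s
  end.

Lemma is_derive_Gamma_V (j : nat) (s x : R) :
  Rabs s < delta -> is_derive (fun u => Gamma_V j u x) s (Gamma_V (S j) s x).
Proof.
  intros Hs; pose proof (smooth_on2_is_derive delta z j s x Hz Hs) as H.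
  destruct j as [| j]; [| exact H].
  eapply is_derive_eq;
    [apply (is_derive_Rplus (fun _ => sqrt 2 * cosn n x)); [apply is_derive_Rconst | exact H] |].
  rewrite Rplus_0_l; reflexivity.
Qed.

Lemma continuity_Gamma_V (j : nat) (s x : R) :
  Rabs s < delta -> continuity_2d_pt (Gamma_V j) s x.
Proof.
  intros Hs; pose proof (smooth_on2_continuity delta z j s x Hz Hs) as H.
  destruct j as [| j]; [| exact H].
  change (continuity_2d_pt (fun u v => sqrt 2 * cosn n v + z u v) s x).
  apply (continuity_2d_pt_plus (fun _ v => sqrt 2 * cosn n v)); [| exact H].
  apply continuity_2d_pt_snd_comp, (continuity_pt_of_is_derive _ _ _
    (is_derive_scal _ _ (sqrt 2) _ (is_derive_cosn n x))).
Qed.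

Ltac branch_leaf s x Hs :=
  idtac; lazymatch goal with
  | |- is_derive ?h _ _ =>
    match h with
    | context [Gamma_V ?j] => apply (is_derive_Gamma_V j s x Hs)
    | context [Derive_n alpha ?j] => apply (smooth_on1_is_derive delta alpha j s Halpha Hs)
    | context [alpha] => apply (smooth_on1_is_derive delta alpha 0 s Halpha Hs)
    end
  | |- continuity_2d_pt ?h _ _ =>
    match h with
    | context [Gamma_V ?j] => apply (continuity_Gamma_V j s x Hs)
    | context [Derive_n alpha ?j] =>
      apply (continuity_2d_pt_fst_comp (Derive_n alpha j)), (continuity_pt_of_is_derive _ _ _
        (smooth_on1_is_derive delta alpha j s Halpha Hs))
    | context [alpha] =>
      apply (continuity_2d_pt_fst_comp alpha), (continuity_pt_of_is_derive _ _ _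
        (smooth_on1_is_derive delta alpha 0 s Halpha Hs))
    end
  end.

Lemma is_derive_Gamma_U_ds (k : nat) (s x : R) :
  Rabs s < delta -> is_derive (fun u => Gamma_U_ds k u x) s (Gamma_U_ds (S k) s x).
Proof.
  intros Hs; destruct k as [| k].
  - apply (is_derive_ext (fun u => kappa D n + alpha u + u * Gamma_V 0 u x));
      [intros u; symmetry; apply Gamma_U_eq |].
    eapply is_derive_eq; [derive_expr ltac:(branch_leaf s x Hs) |].
    unfold Gamma_U_ds; simpl INR; ring.
  - unfold Gamma_U_ds; cbv beta iota.
    eapply is_derive_eq; [derive_expr ltac:(branch_leaf s x Hs) |].
    rewrite (S_INR (S k)); ring.
Qed.

Lemma continuity_Gamma_U_ds (k : nat) (s x : R) :
  Rabs s < delta -> continuity_2d_pt (Gamma_U_ds k) s x.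
Proof.
  intros Hs; destruct k as [| k].
  - apply (continuity_2d_pt_ext (fun u v => kappa D n + alpha u + u * Gamma_V 0 u v));
      [intros u v; symmetry; apply Gamma_U_eq |].
    continuity_2d_expr ltac:(branch_leaf s x Hs).
  - unfold Gamma_U_ds; continuity_2d_expr ltac:(branch_leaf s x Hs).
Qed.

Ltac exp_leaf s x Hs :=
  idtac; lazymatch goal with
  | |- is_derive ?h _ _ =>
    match h with
    | context [Gamma_U_ds ?j] => apply (is_derive_Gamma_U_ds j s x Hs)
    | context [Gamma_U D n alpha z] => apply (is_derive_Gamma_U_ds 0 s x Hs)
    end
  | |- continuity_2d_pt ?h _ _ =>
    match h with
    | context [Gamma_U_ds ?j] => apply (continuity_Gamma_U_ds j s x Hs)
    | context [Gamma_U D n alpha z] => apply (continuity_Gamma_U_ds 0 s x Hs)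
    end
  end.

Lemma is_derive_exp_Gamma_U_ds (k : nat) (s x : R) : (k < 3)%nat -> Rabs s < delta ->
  is_derive (fun u => exp_Gamma_U_ds k u x) s (exp_Gamma_U_ds (S k) s x).
Proof.
  intros Hk Hs; destruct k as [| [| [| k]]]; [| | | lia];
    unfold exp_Gamma_U_ds; cbv beta iota;
    (eapply is_derive_eq; [derive_expr ltac:(exp_leaf s x Hs) | cbv beta; ring]).
Qed.

Lemma continuity_exp_Gamma_U_ds (k : nat) (s x : R) :
  Rabs s < delta -> continuity_2d_pt (exp_Gamma_U_ds k) s x.
Proof.
  intros Hs; destruct k as [| [| [| k]]];
    unfold exp_Gamma_U_ds; cbv beta iota; continuity_2d_expr ltac:(exp_leaf s x Hs).
Qed.

Lemma derive_chain_moment_Gamma_U (w : R -> R) :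
  (forall x, continuity_pt w x) -> derive_chain 3 delta (fun k => moment w (Gamma_U_ds k)).
Proof.
  intros Hw; apply derive_chain_moment; [exact Hw | |];
    intros k s x _ Hs; [apply is_derive_Gamma_U_ds | apply continuity_Gamma_U_ds]; exact Hs.
Qed.

Lemma derive_chain_moment_exp_Gamma_U (w : R -> R) :
  (forall x, continuity_pt w x) -> derive_chain 3 delta (fun k => moment w (exp_Gamma_U_ds k)).
Proof.
  intros Hw; apply derive_chain_moment; [exact Hw | |]; intros k s x Hk Hs;
    [apply is_derive_exp_Gamma_U_ds | apply continuity_exp_Gamma_U_ds]; assumption.
Qed.

Lemma derive_chain_K_ds : derive_chain 3 delta K_ds.
Proof.
  intros k s _ Hs; destruct k as [| k].
  - unfold K_ds; eapply is_derive_eq; [derive_expr ltac:(branch_leaf s 0 Hs) | ring].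
  - exact (smooth_on1_is_derive delta alpha (S k) s Halpha Hs).
Qed.

Lemma Gamma_U_weak_form (m : nat) (s : R) : Rabs s < delta ->
  kappa D m * moment (cosn m) (Gamma_U_ds 0) s * moment (fun _ => 1) (exp_Gamma_U_ds 0) s
  = K_ds 0 s * moment (cosn m) (exp_Gamma_U_ds 0) s.
Proof.
  intros Hs; unfold moment, K_ds, Gamma_U_ds, exp_Gamma_U_ds; cbv beta iota.
  rewrite (RInt_ext_R (fun x => 1 * (exp (Gamma_U D n alpha z s x) * 1))
             (fun x => exp (Gamma_U D n alpha z s x))) by (intros x; ring).
  rewrite (RInt_ext_R (fun x => cosn m x * (exp (Gamma_U D n alpha z s x) * 1))
             (fun x => cosn m x * exp (Gamma_U D n alpha z s x))) by (intros x; ring).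
  replace (kappa D m) with (1 + D * (2 * INR m * PI) ^ 2) by (unfold kappa; ring).
  apply (stationary_solution_weak_form D _ _ (Gamma_U D n alpha z s) (cosn m)
           (fun x => - (2 * INR m * PI) * sin (2 * INR m * PI * x))).
  - exact HD.
  - exact (Hstat s Hs).
  - intros x; unfold Gamma_U; auto_derive; exact (proj1 (Hz O 1%nat s x Hs)).
  - apply is_derive_cosn.
  - intros x; unfold cosn; auto_derive; [exact I | ring].
  - exact (proj1 (cosn_periodic m)).
  - rewrite (proj2 (cosn_periodic m)); reflexivity.
Qed.

(* The k-th s-derivative of the identity [Gamma_U_weak_form]. *)
Definition weak_form_ds (m k : nat) (s : R) : R :=
  leibniz3 (fun j s => kappa D m * moment (cosn m) (Gamma_U_ds j) s)
    (fun j => moment (fun _ => 1) (exp_Gamma_U_ds j)) k s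
  - leibniz3 K_ds (fun j => moment (cosn m) (exp_Gamma_U_ds j)) k s.

Lemma weak_form_ds_at_0 (m k : nat) : (k <= 3)%nat -> weak_form_ds m k 0 = 0.
Proof.
  intros Hk.
  assert (Hcos : forall x, continuity_pt (cosn m) x)
    by (intros x; exact (continuity_pt_of_is_derive _ _ _ (is_derive_cosn m x))).
  assert (Hone : forall x, continuity_pt (fun _ => 1) x)
    by (intros x; exact (continuity_pt_of_is_derive _ _ _ (is_derive_Rconst 1 x))).
  apply (derive_chain_vanish 3 delta (weak_form_ds m));
    [| | exact Hk | rewrite Rabs_R0; exact Hdelta].
  - apply derive_chain_minus; apply derive_chain_leibniz3.
    + apply derive_chain_scal, derive_chain_moment_Gamma_U, Hcos.
    + apply derive_chain_moment_exp_Gamma_U, Hone.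
    + apply derive_chain_K_ds.
    + apply derive_chain_moment_exp_Gamma_U, Hcos.
  - intros s Hs; unfold weak_form_ds, leibniz3; rewrite (Gamma_U_weak_form m s Hs); ring.
Qed.

Lemma Gamma_U_ds_at_0 (x : R) :
  Gamma_U D n alpha z 0 x = kappa D n /\
  Gamma_U_ds 0 0 x = kappa D n /\
  Gamma_U_ds 1 0 x = sqrt 2 * cosn n x /\
  Gamma_U_ds 2 0 x = Derive_n alpha 2 0 + 2 * Gamma_V 1 0 x /\
  Gamma_U_ds 3 0 x = Derive_n alpha 3 0 + 3 * Gamma_V 2 0 x.
Proof.
  assert (H0 : Gamma_U D n alpha z 0 x = kappa D n) by (rewrite Gamma_U_eq, Halpha0; ring).
  unfold Gamma_U_ds; simpl INR; repeat split; [exact H0 | exact H0 | | ring | ring].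
  - unfold Gamma_V; rewrite Hz0; change (Derive_n alpha 1 0) with (Derive alpha 0).
    rewrite Halpha'0; ring.
Qed.

Lemma continuous_Gamma_V_at_0 (j : nat) (x : R) : continuous (Gamma_V j 0) x.
Proof. apply continuous_slice, continuity_Gamma_V; rewrite Rabs_R0; exact Hdelta. Qed.

Let e := exp (kappa D n).
Let a2 := Derive_n alpha 2 0.
Let zY := RInt (Gamma_V 1 0) 0 1.
Let zC2Y := RInt (fun x => cosn n x ^ 2 * Gamma_V 1 0 x) 0 1.
Let zCZ := RInt (fun x => cosn n x * Gamma_V 2 0 x) 0 1.

(* The arguments are the coefficients of the integrand in [RInt_cosn_poly]; they keep
   [sqrt 2 * sqrt 2] unsimplified, so that the integrand identity is a ring identity. *)
Ltac moment_at_0 p0 p1 p2 p3 p4 q0 q2 r :=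
  unfold moment;
  rewrite (RInt_cosn_poly n (Gamma_V 1 0) (Gamma_V 2 0) _ p0 p1 p2 p3 p4 q0 q2 r Hn
             (continuous_Gamma_V_at_0 1) (continuous_Gamma_V_at_0 2));
  unfold e, a2, zY, zC2Y, zCZ;
  [ repeat rewrite sqrt_sqrt by lra; field
  | intros x; destruct (Gamma_U_ds_at_0 x) as (U & U0 & U1 & U2 & U3);
    unfold exp_Gamma_U_ds; cbv beta iota; rewrite ?cosn_double, ?U, ?U0, ?U1, ?U2, ?U3;
    ring ].

Lemma moments_one_at_0 :
  moment (fun _ => 1) (exp_Gamma_U_ds 0) 0 = e /\
  moment (fun _ => 1) (exp_Gamma_U_ds 1) 0 = 0 /\
  moment (fun _ => 1) (exp_Gamma_U_ds 2) 0 = e * (1 + a2 + 2 * zY).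
Proof.
  repeat split.
  - moment_at_0 e 0 0 0 0 0 0 0.
  - moment_at_0 0 (e * sqrt 2) 0 0 0 0 0 0.
  - moment_at_0 (e * a2) 0 (e * (sqrt 2 * sqrt 2)) 0 0 (2 * e) 0 0.
Qed.

Lemma moments_cosn_at_0 :
  moment (cosn n) (Gamma_U_ds 0) 0 = 0 /\
  moment (cosn n) (Gamma_U_ds 1) 0 = sqrt 2 / 2 /\
  moment (cosn n) (Gamma_U_ds 3) 0 = 3 * zCZ /\
  moment (cosn n) (exp_Gamma_U_ds 0) 0 = 0 /\
  moment (cosn n) (exp_Gamma_U_ds 1) 0 = e * (sqrt 2 / 2) /\
  moment (cosn n) (exp_Gamma_U_ds 3) 0
    = e * (3 * sqrt 2 / 4 + 3 * sqrt 2 * a2 / 2 + 6 * sqrt 2 * zC2Y + 3 * zCZ).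
Proof.
  repeat split.
  - moment_at_0 0 (kappa D n) 0 0 0 0 0 0.
  - moment_at_0 0 0 (sqrt 2) 0 0 0 0 0.
  - moment_at_0 0 (Derive_n alpha 3 0) 0 0 0 0 0 3.
  - moment_at_0 0 e 0 0 0 0 0 0.
  - moment_at_0 0 0 (e * sqrt 2) 0 0 0 0 0.
  - moment_at_0 0 (e * Derive_n alpha 3 0) (3 * e * sqrt 2 * a2) 0
      (e * (sqrt 2 * (sqrt 2 * sqrt 2))) 0 (6 * e * sqrt 2) (3 * e).
Qed.

Lemma moments_cosn_double_at_0 :
  moment (cosn (2 * n)) (Gamma_U_ds 0) 0 = 0 /\
  moment (cosn (2 * n)) (Gamma_U_ds 2) 0 = 4 * zC2Y - 2 * zY /\
  moment (cosn (2 * n)) (exp_Gamma_U_ds 0) 0 = 0 /\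
  moment (cosn (2 * n)) (exp_Gamma_U_ds 2) 0 = e * (1 / 2 + 4 * zC2Y - 2 * zY).
Proof.
  repeat split.
  - moment_at_0 (- kappa D n) 0 (2 * kappa D n) 0 0 0 0 0.
  - moment_at_0 (- a2) 0 (2 * a2) 0 0 (-2) 4 0.
  - moment_at_0 (- e) 0 (2 * e) 0 0 0 0 0.
  - moment_at_0 (- e * a2) 0 (2 * e * a2 - e * (sqrt 2 * sqrt 2)) 0
      (2 * e * (sqrt 2 * sqrt 2)) (-2 * e) (4 * e) 0.
Qed.

Lemma alpha_second_derivative_at_0 :
  Derive_n alpha 2 0 * (6 * (kappa D n - 1)) = kappa D n * (2 * kappa D n - 3).
Proof.
  assert (I3 := weak_form_ds_at_0 n 3 ltac:(lia)).
  assert (I2 := weak_form_ds_at_0 (2 * n) 2 ltac:(lia)).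
  cbv beta iota delta [weak_form_ds leibniz3] in I3, I2.
  destruct moments_one_at_0 as (E0 & E1 & E2).
  destruct moments_cosn_at_0 as (L0 & L1 & L3 & F0 & F1 & F3).
  destruct moments_cosn_double_at_0 as (P0 & P2 & G0 & G2).
  assert (K0 : K_ds 0 0 = kappa D n) by (unfold K_ds; rewrite Halpha0; ring).
  assert (K1 : K_ds 1 0 = 0) by exact Halpha'0.
  change (K_ds 2 0) with a2 in I3, I2.
  rewrite E0, E1, E2, L0, L1, L3, F0, F1, F3, K0, K1 in I3.
  rewrite E0, E1, E2, P0, P2, G0, G2, K0, K1, kappa_double in I2.
  assert (He : 0 < e) by apply exp_pos.
  assert (Hr : 0 < sqrt 2) by (apply sqrt_lt_R0; lra).
  assert (Ha : a2 = kappa D n / 2 - kappa D n * (4 * zC2Y - 2 * zY)).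
  { assert (H : 3 / 2 * sqrt 2 * e * (kappa D n / 2 - kappa D n * (4 * zC2Y - 2 * zY) - a2) = 0)
      by (rewrite <- I3; field).
    destruct (Rmult_integral _ _ H) as [H' | H']; [nra | lra]. }
  assert (HX : (3 * kappa D n - 3) * (4 * zC2Y - 2 * zY) = kappa D n / 2).
  { assert (H : e * ((3 * kappa D n - 3) * (4 * zC2Y - 2 * zY) - kappa D n / 2) = 0)
      by (rewrite <- I2; field).
    destruct (Rmult_integral _ _ H); lra. }
  change (Derive_n alpha 2 0) with a2; rewrite Ha.
  replace ((kappa D n / 2 - kappa D n * (4 * zC2Y - 2 * zY)) * (6 * (kappa D n - 1)))
    with (3 * kappa D n * (kappa D n - 1)
          - 2 * kappa D n * ((3 * kappa D n - 3) * (4 * zC2Y - 2 * zY)))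
    by field.
  rewrite HX; field.
Qed.

End Branch.

Lemma is_branch_alpha_second_derivative (D : R) (n : nat) (delta : R)
    (alpha : R -> R) (z : R -> R -> R) :
  0 < D -> (1 <= n)%nat -> is_branch D n delta alpha z ->
  Derive_n alpha 2 0 * (6 * (kappa D n - 1)) = kappa D n * (2 * kappa D n - 3).
Proof.
  intros HD Hn (Hdelta & Ha & Ha0 & Ha'0 & Hz & Hz0 & _ & Hstat).
  exact (alpha_second_derivative_at_0 D n delta alpha z HD Hn Hdelta Ha Ha0 Ha'0 Hz Hz0 Hstat).
Qed.

Lemma subcritical_of_derive2_neg (delta : R) (a : R -> R) :
  0 < delta -> smooth_on1 delta a -> a 0 = 0 -> Derive a 0 = 0 ->
  Derive_n a 2 0 < 0 -> subcritical a.
Proof.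
  intros Hdel Ha Ha0 Ha'0 Hneg.
  apply (neg_near_0_of_derive2_neg a (Derive a) delta (Derive_n a 2 0)); try assumption.
  - intros s Hs; exact (smooth_on1_is_derive delta a 0 s Ha Hs).
  - apply (smooth_on1_is_derive delta a 1 0 Ha); rewrite Rabs_R0; exact Hdel.
Qed.

Lemma supercritical_of_derive2_pos (delta : R) (a : R -> R) :
  0 < delta -> smooth_on1 delta a -> a 0 = 0 -> Derive a 0 = 0 ->
  Derive_n a 2 0 > 0 -> supercritical a.
Proof.
  intros Hdel Ha Ha0 Ha'0 Hpos.
  destruct (neg_near_0_of_derive2_neg (fun s => -1 * a s) (fun s => -1 * Derive a s) delta
              (-1 * Derive_n a 2 0)) as [eps [Heps Hs]]; [exact Hdel | | | | | lra |].
  - intros s Hs; apply is_derive_scal, (smooth_on1_is_derive delta a 0 s Ha Hs).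
  - apply is_derive_scal, (smooth_on1_is_derive delta a 1 0 Ha); rewrite Rabs_R0; exact Hdel.
  - rewrite Ha0; ring.
  - rewrite Ha'0; ring.
  - exists eps; split; [exact Heps |]; intros s Hs'; specialize (Hs s Hs'); lra.
Qed.

Lemma kappa_gt_1 (D : R) (n : nat) : 0 < D -> (1 <= n)%nat -> 1 < kappa D n.
Proof.
  intros HD Hn; apply le_INR in Hn; simpl in Hn; pose proof PI_RGT_0.
  assert (0 < PI ^ 2 * INR n ^ 2 * D)
    by (apply Rmult_lt_0_compat; [apply Rmult_lt_0_compat |]; try apply pow_lt; lra).
  unfold kappa; lra.
Qed.

Lemma kappa_eq (D : R) (n : nat) : kappa D n = 1 + 8 * INR n ^ 2 * PI ^ 2 * D / 2.
Proof. unfold kappa; field. Qed.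

Lemma eight_n2_PI2_pos (n : nat) : (1 <= n)%nat -> 0 < 8 * INR n ^ 2 * PI ^ 2.
Proof.
  intros Hn; apply le_INR in Hn; simpl in Hn; pose proof PI_RGT_0.
  apply Rmult_lt_0_compat; [apply Rmult_lt_0_compat; [lra |] |]; apply pow_lt; lra.
Qed.

Lemma kappa_lt_3_2_iff (D : R) (n : nat) :
  (1 <= n)%nat -> kappa D n < 3 / 2 <-> D < / (8 * INR n ^ 2 * PI ^ 2).
Proof.
  intros Hn; pose proof (eight_n2_PI2_pos n Hn) as Hq; rewrite kappa_eq.
  set (q := 8 * INR n ^ 2 * PI ^ 2) in *.
  assert (Hqi : q * / q = 1) by (field; lra).
  split; intros H.
  - apply (Rmult_lt_reg_l q); lra.
  - apply (Rmult_lt_compat_l q) in H; lra.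
Qed.

Lemma kappa_gt_3_2_iff (D : R) (n : nat) :
  (1 <= n)%nat -> kappa D n > 3 / 2 <-> D > / (8 * INR n ^ 2 * PI ^ 2).
Proof.
  intros Hn; pose proof (eight_n2_PI2_pos n Hn) as Hq; rewrite kappa_eq.
  set (q := 8 * INR n ^ 2 * PI ^ 2) in *.
  assert (Hqi : q * / q = 1) by (field; lra).
  split; intros H.
  - apply (Rmult_lt_reg_l q); lra.
  - apply (Rmult_lt_compat_l q) in H; lra.
Qed.

Theorem mainTheorem14 (D : R) (n : nat) (delta : R)
    (alpha : R -> R) (z : R -> R -> R) :
  0 < D -> (1 <= n)%nat ->
  is_branch D n delta alpha z ->
  kappa D n <> 3 / 2 ->
  pitchfork alpha /\
  (kappa D n < 3 / 2 <-> Derive_n alpha 2 0 < 0) /\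
  (kappa D n > 3 / 2 <-> Derive_n alpha 2 0 > 0) /\
  (Derive_n alpha 2 0 < 0 -> subcritical alpha) /\
  (Derive_n alpha 2 0 > 0 -> supercritical alpha) /\
  (kappa D n < 3 / 2 <-> D < / (8 * (INR n) ^ 2 * PI ^ 2)) /\
  (kappa D n > 3 / 2 <-> D > / (8 * (INR n) ^ 2 * PI ^ 2)).
Proof.
  intros HD Hn Hb Hk.
  pose proof (is_branch_alpha_second_derivative D n delta alpha z HD Hn Hb) as Ha2.
  pose proof (kappa_gt_1 D n HD Hn) as Hk1.
  destruct Hb as (Hdelta & Ha & Ha0 & Ha'0 & _).
  split; [intros H0; rewrite H0 in Ha2; apply Hk; nra |].
  split; [split; intros; nra |].
  split; [split; intros; nra |].
  split; [exact (subcritical_of_derive2_neg delta alpha Hdelta Ha Ha0 Ha'0) |].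
  split; [exact (supercritical_of_derive2_pos delta alpha Hdelta Ha Ha0 Ha'0) |].
  split; [apply kappa_lt_3_2_iff | apply kappa_gt_3_2_iff]; exact Hn.
Qed.
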